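(* Let $\mathcal{D}[t]\subset\mathcal{H}\subset\mathcal{D}^\times[t^\times]$ be a rigged Hilbert space with $\mathcal{D}[t]$ complete and reflexive, and let $\{\zeta_n\}$ be a sequence in $\mathcal{D}^\times$. If $\{\zeta_n\}$ possesses a biorthogonal sequence $\{\xi_n\}\subset\mathcal{D}$ (i.e. $\langle\zeta_n,\xi_k\rangle=\delta_{n,k}$ for all $n,k$) which is total in $\mathcal{D}$ and Riesz-Fischer-like, then $\{\zeta_n\}$ is a Bessel-like sequence.
   Context: A rigged Hilbert space $\mathcal{D}[t]\subset\mathcal{H}\subset\mathcal{D}^\times[t^\times]$: $\mathcal{D}$ is a dense subspace of the Hilbert space $\mathcal{H}$ with a locally convex topology $t$ finer than the norm topology, $\mathcal{D}^\times$ is the space of continuous conjugate-linear functionals on $\mathcal{D}[t]$ with the strong dual topology $t^\times=\beta(\mathcal{D}^\times,\mathcal{D})$, $\mathcal{H}\subset\mathcal{D}^\times$, and the duality form $\langle\Phi,\eta\rangle$ (value of $\Phi\in\mathcal{D}^\times$ at $\eta\in\mathcal{D}$) extends the inner product. A sequence is total if its linear span is dense in $\mathcal{D}[t]$. $\mathcal{L}(\mathcal{D},\mathcal{D}^\times)$ denotes the continuous linear maps $\mathcal{D}[t]\to\mathcal{D}^\times[t^\times]$. $\mathcal{C}(\mathcal{D},\mathcal{H})$ is the set of $X\in\mathcal{L}(\mathcal{D},\mathcal{D}^\times)$ mapping $\mathcal{D}$ into $\mathcal{H}$ continuously from $\mathcal{D}[t]$ into $\mathcal{H}$. A sequence $\{\xi_n\}\subset\mathcal{D}$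 is Riesz-Fischer-like if for every orthonormal basis $\{e_n\}$ of $\mathcal{H}$ there exists $S\in\mathcal{C}(\mathcal{D},\mathcal{H})$ with $S\xi_n=e_n$ for all $n$. A sequence $\{\zeta_n\}\subset\mathcal{D}^\times$ is Bessel-like if for every bounded subset $\mathcal{M}$ of $\mathcal{D}[t]$, $\sup_{\eta\in\mathcal{M}}\sum_{k=1}^\infty|\langle\zeta_k,\eta\rangle|^2<\infty$. *)

From HB Require Import structures.
From mathcomp Require Import all_boot all_order all_algebra.
From mathcomp Require Import all_classical all_reals all_analysis.
From mathcomp Require Import complex.
Set Implicit Arguments. Unset Strict Implicit. Unset Printing Implicit Defensive.
Import Order.TTheory GRing.Theory Num.Theory.
Import numFieldTopology.Exports numFieldNormedType.Exports.
Local Open Scope classical_set_scope.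
Local Open Scope ring_scope.

Section Hilbert.
Variables (R : realType) (H : lmodType R[i]) (ip : H -> H -> R[i]).

Definition is_inner_product :=
  [/\ forall (a : R[i]) (x y z : H), ip (a *: x + y) z = a * ip x z + ip y z,
      forall x y : H, ip y x = (ip x y)^*,
      forall x : H, 0 <= ip x x &
      forall x : H, ip x x = 0 -> x = 0].

(* Cauchy / convergent sequences for the norm induced by ip
   (ip x x = ||x||^2, so "ip (u n - u m) (u n - u m) < e" for all e > 0
   is the usual epsilon condition). *)
Definition h_cauchy (u : nat -> H) :=
  forall e : R[i], 0 < e -> exists N : nat, forall n m : nat,
    (N <= n)%N -> (N <= m)%N -> ip (u n - u m) (u n - u m) < e.

Definition h_converges (u : nat -> H) (x : H) :=
  forall e : R[i], 0 < e -> exists N : nat, forall n : nat,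
    (N <= n)%N -> ip (u n - x) (u n - x) < e.

Definition is_hilbert_space :=
  is_inner_product /\ forall u, h_cauchy u -> exists x, h_converges u x.

Definition orthonormal_basis (e : nat -> H) :=
  (forall n m : nat, ip (e n) (e m) = (n == m)%:R) /\
  (forall x : H, (forall n, ip x (e n) = 0) -> x = 0).
End Hilbert.

(* D^x is represented by the functions D -> C that are conjugate-linear  *)
(* and t-continuous; <Phi, eta> is Phi eta.                              *)
Section Rigged.
Variables (R : realType) (D : tvsType R[i]).

Definition tbounded (M : set D) :=
  forall U : set D, nbhs (0 : D) U ->
    exists r : R[i], 0 < r /\
      forall l : R[i], r <= `|l| -> M `<=` [set l *: u | u in U].

Definition conj_linear (f : D -> R[i]) :=
  forall (a : R[i]) (x y : D), f (a *: x + y) = a^* * f x + f y.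

Definition t_continuous_functional (f : D -> R[i]) :=
  forall (x : D) (e : R[i]), 0 < e -> nbhs x (fun y => `|f y - f x| < e).

Definition dual_elt (Phi : D -> R[i]) :=
  conj_linear Phi /\ t_continuous_functional Phi.

Definition sdual_nbhs (Phi0 : D -> R[i]) (V : set (D -> R[i])) :=
  exists (M : set D) (e : R[i]), [/\ tbounded M, 0 < e &
    forall Phi, dual_elt Phi ->
      (forall x, M x -> `|Phi x - Phi0 x| < e) -> V Phi].

Definition sdual_bounded (B : set (D -> R[i])) :=
  B `<=` dual_elt /\
  forall V, sdual_nbhs (fun _ => 0) V ->
    exists r : R[i], 0 < r /\ forall l : R[i], r <= `|l| ->
      B `<=` [set (fun x => l * Psi x) | Psi in V].

Definition bidual_elt (F : (D -> R[i]) -> R[i]) :=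
  (forall (a : R[i]) Phi Psi, dual_elt Phi -> dual_elt Psi ->
      F (fun x => a * Phi x + Psi x) = a * F Phi + F Psi) /\
  (forall Phi0, dual_elt Phi0 -> forall e : R[i], 0 < e ->
      sdual_nbhs Phi0 (fun Phi => `|F Phi - F Phi0| < e)).

Definition sbidual_nbhs (F0 : (D -> R[i]) -> R[i])
    (W : set ((D -> R[i]) -> R[i])) :=
  exists (B : set (D -> R[i])) (e : R[i]), [/\ sdual_bounded B, 0 < e &
    forall F, bidual_elt F ->
      (forall Phi, B Phi -> `|F Phi - F0 Phi| < e) -> W F].

Definition canon (x : D) : (D -> R[i]) -> R[i] := fun Phi => Phi x.

(* D[t] is reflexive: the canonical map is a bijection of D onto the
   dual of D^x[t^x] and a homeomorphism onto it with its strong topology.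
   (Elements of D^xx are identified when they agree on D^x.) *)
Definition reflexive_tvs :=
  [/\ forall x, bidual_elt (canon x),
      forall x y : D, (forall Phi, dual_elt Phi -> Phi x = Phi y) -> x = y,
      forall F, bidual_elt F -> exists x : D,
        forall Phi, dual_elt Phi -> F Phi = Phi x,
      forall (x0 : D) W, sbidual_nbhs (canon x0) W ->
        nbhs x0 (fun x => W (canon x)) &
      forall (x0 : D) (U : set D), nbhs x0 U ->
        sbidual_nbhs (canon x0) (fun F => exists2 x, U x &
           forall Phi, dual_elt Phi -> F Phi = Phi x)].

Definition complete_tvs :=
  forall F : set_system D, ProperFilter F -> cauchy F -> exists x : D, F --> x.

Definition total_seq (xi : nat -> D) :=
  forall (x0 : D) (U : set D), nbhs x0 U ->
    exists (N : nat) (a : nat -> R[i]), U (\sum_(k < N) a k *: xi k).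

Definition bessel_like (zeta : nat -> D -> R[i]) :=
  forall M : set D, tbounded M ->
    exists c : R[i], forall x, M x ->
      forall N : nat, \sum_(k < N) `|zeta k x| ^+ 2 <= c.

Variables (H : lmodType R[i]) (ip : H -> H -> R[i]) (j : D -> H).

(* D[t] c H c D^x[t^x] is a rigged Hilbert space (with D identified with
   j(D) and h in H identified with the functional eta |-> ip h (j eta)) *)
Definition rigged :=
  [/\ is_hilbert_space ip,
      forall (a : R[i]) (x y : D), j (a *: x + y) = a *: j x + j y,
      injective j,
      forall (h : H) (e : R[i]), 0 < e -> exists x : D, ip (h - j x) (h - j x) < e &
      forall (x0 : D) (e : R[i]), 0 < e ->
        nbhs x0 (fun x => ip (j x - j x0) (j x - j x0) < e)].

Definition emb (h : H) : D -> R[i] := fun x => ip h (j x).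

Definition in_CDH (S : D -> H) :=
  [/\ forall (a : R[i]) (x y : D), S (a *: x + y) = a *: S x + S y,
      forall (x0 : D) V, sdual_nbhs (emb (S x0)) V ->
        nbhs x0 (fun x => V (emb (S x))) &
      forall (x0 : D) (e : R[i]), 0 < e ->
        nbhs x0 (fun x => ip (S x - S x0) (S x - S x0) < e)].

Definition riesz_fischer_like (xi : nat -> D) :=
  forall e : nat -> H, orthonormal_basis ip e ->
    exists S : D -> H, in_CDH S /\ forall n, S (xi n) = e n.
End Rigged.

From HB Require Import structures.
From mathcomp Require Import all_boot all_order all_algebra.
From mathcomp Require Import all_classical all_reals all_analysis.
From mathcomp Require Import complex.
From mathcomp Require Import ring.
Import Order.TTheory GRing.Theory Num.Theory.
Local Open Scope ring_scope.
Set Implicit Arguments. Unset Strict Implicit.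

(* Being biorthogonal to {zeta_n}, the sequence {xi_n} is linearly independent, so
   Gram-Schmidt (for the inner product pulled back to D) turns it into an
   orthonormal sequence {e_n} with the same span; as {xi_n} is total in D[t] and
   D is dense in H, {e_n} is an orthonormal basis of H.  Take S in C(D,H) with
   S xi_n = e_n.  The continuous conjugate-linear functionals zeta_n and
   <e_n, S .> agree on the total sequence {xi_n}, hence coincide, and Bessel's
   inequality gives sum_k |<zeta_k, eta>|^2 <= ||S eta||^2, which is bounded on
   bounded sets by continuity of S at 0. *)

Section LinearFor.
Variables (R : pzRingType) (U : lmodType R) (V : zmodType).
Variables (s : GRing.Scale.law R V) (f : U -> V).
Hypothesis fL : linear_for s f.

Lemma linear_forB : {morph f : x y / x - y}.
Proof. exact: (GRing.zmod_morphism_linear fL). Qed.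

Lemma linear_for0 : f 0 = 0.
Proof. by rewrite -(subrr (0 : U)) linear_forB subrr. Qed.

Lemma linear_forZ a x : f (a *: x) = s a (f x).
Proof. exact: (GRing.scalable_linear fL). Qed.

Lemma linear_for_sum (I : Type) (r : seq I) (P : pred I) (F : I -> U) :
  f (\sum_(i <- r | P i) F i) = \sum_(i <- r | P i) f (F i).
Proof.
have fN x : f (- x) = - f x by rewrite -[- x]sub0r linear_forB linear_for0 sub0r.
elim/big_rec2: _ => [|i _ y _ <-]; first exact: linear_for0.
by rewrite -{1}[y]opprK linear_forB fN opprK.
Qed.
End LinearFor.

Section InnerProduct.
Variables (R : realType) (H : lmodType R[i]) (ip : H -> H -> R[i]).
Hypothesis ipH : is_inner_product ip.

Lemma ip_sym x y : ip y x = (ip x y)^*.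
Proof. by case: ipH => _ sym _ _; apply: sym. Qed.

Lemma ip_ge0 x : 0 <= ip x x.
Proof. by case: ipH => _ _ ge0 _; apply: ge0. Qed.

Lemma ip_eq0 x : ip x x = 0 -> x = 0.
Proof. by case: ipH => _ _ _ eq0; apply: eq0. Qed.

Lemma ipl_scalar z : scalar (ip^~ z).
Proof. by case: ipH => lin _ _ _ a x y; apply: lin. Qed.

Lemma ipr_conj_linear z : linear_for (Num.conj \; *%R) (ip z).
Proof.
by move=> a x y; rewrite ip_sym (ipl_scalar _ a) rmorphD rmorphM /= -!ip_sym.
Qed.

Lemma ipDl x y z : ip (x + y) z = ip x z + ip y z.
Proof. by have /= := ipl_scalar z 1 x y; rewrite scale1r mul1r. Qed.

Lemma ipBl x y z : ip (x - y) z = ip x z - ip y z.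
Proof. exact: (linear_forB (ipl_scalar z)). Qed.

Lemma ipZl a x z : ip (a *: x) z = a * ip x z.
Proof. exact: (linear_forZ (ipl_scalar z)). Qed.

Lemma ip_suml (I : Type) (r : seq I) (P : pred I) (F : I -> H) z :
  ip (\sum_(i <- r | P i) F i) z = \sum_(i <- r | P i) ip (F i) z.
Proof. exact: (linear_for_sum (ipl_scalar z)). Qed.

Lemma ipDr x y z : ip z (x + y) = ip z x + ip z y.
Proof. by have /= := ipr_conj_linear z 1 x y; rewrite scale1r rmorph1 mul1r. Qed.

Lemma ipBr x y z : ip z (x - y) = ip z x - ip z y.
Proof. exact: (linear_forB (ipr_conj_linear z)). Qed.

Lemma ipZr a x z : ip z (a *: x) = a^* * ip z x.
Proof. exact: (linear_forZ (ipr_conj_linear z)). Qed.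

Lemma ip_sumr (I : Type) (r : seq I) (P : pred I) (F : I -> H) z :
  ip z (\sum_(i <- r | P i) F i) = \sum_(i <- r | P i) ip z (F i).
Proof. exact: (linear_for_sum (ipr_conj_linear z)). Qed.

Lemma ip_gt0 x : x != 0 -> 0 < ip x x.
Proof.
by move=> x0; rewrite lt0r ip_ge0 andbT; apply: contra_neq x0; apply: ip_eq0.
Qed.

Lemma ip_le_sub_orth x z : ip x z = 0 -> ip x x <= ip (x - z) (x - z).
Proof.
move=> xz; have zx : ip z x = 0 by rewrite ip_sym xz conjC0.
by rewrite ipBl !ipBr xz zx subr0 sub0r opprK lerDl ip_ge0.
Qed.

Lemma ip_sub_le x y : ip (x - y) (x - y) <= 2 * ip x x + 2 * ip y y.
Proof.
have parallelogram : ip (x - y) (x - y) + ip (x + y) (x + y) = 2 * ip x x + 2 * ip y y.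
  by rewrite -[- y]scaleN1r !ipDl !ipDr !ipZl !ipZr rmorphN1; ring.
by rewrite -parallelogram lerDl ip_ge0.
Qed.

Lemma bessel_inequality (e : nat -> H) N y :
  (forall k m, (k < N)%N -> (m < N)%N -> ip (e k) (e m) = (k == m)%:R) ->
  \sum_(k < N) `|ip (e k) y| ^+ 2 <= ip y y.
Proof.
move=> ortho; set a := fun k => ip y (e k).
set p := \sum_(k < N) a k *: e k.
set S := \sum_(k < N) a k * (a k)^*.
have normS : \sum_(k < N) `|ip (e k) y| ^+ 2 = S.
  by apply: eq_bigr => k _; rewrite normCKC /a (ip_sym (e k)) conjCK.
have ip_yp : ip y p = S.
  by rewrite ip_sumr; apply: eq_bigr => k _; rewrite ipZr mulrC.
have ip_py : ip p y = S.
  rewrite ip_sym ip_yp rmorph_sum; apply: eq_bigr => k _.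
  by rewrite rmorphM /= conjCK mulrC.
have ip_pp : ip p p = S.
  rewrite ip_suml; apply: eq_bigr => k _; rewrite ipZl ip_sumr (bigD1 k) //=.
  rewrite big1 ?addr0 => [|l lk]; first by rewrite ipZr ortho ?eqxx ?mulr1.
  by rewrite ipZr ortho // eq_sym (negbTE (lk : val l != val k)) !mulr0.
have := ip_ge0 (y - p).
by rewrite ipBl !ipBr ip_yp ip_py ip_pp normS subrr subr0 subr_ge0.
Qed.

Lemma normr_ip_lt e y r : ip e e = 1 -> 0 <= r -> ip y y < r ^+ 2 -> `|ip e y| < r.
Proof.
move=> e1 r0 yr; rewrite -(ltr_pXn2r (n := 2)) ?nnegrE ?normr_ge0 //.
apply: le_lt_trans yr; have := @bessel_inequality (fun _ => e) 1 y.
by rewrite big_ord1; apply=> k m; rewrite !ltnS !leqn0 => /eqP-> /eqP->.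
Qed.

Lemma is_inner_product_comp (U : lmodType R[i]) (j : U -> H) :
  linear j -> injective j -> is_inner_product (fun x y => ip (j x) (j y)).
Proof.
move=> jL jI; split=> [a x y z|x y|x|x] /=.
- by rewrite jL ipDl ipZl.
- exact: ip_sym.
- exact: ip_ge0.
- by move=> /ip_eq0; rewrite -(linear_for0 jL) => /jI.
Qed.
End InnerProduct.

Section GramSchmidt.
Variables (R : realType) (U : lmodType R[i]) (ip : U -> U -> R[i]).
Variables (zeta : nat -> U -> R[i]) (xi : nat -> U).
Hypothesis ipU : is_inner_product ip.
Hypothesis zetaL : forall n, linear_for (Num.conj \; *%R) (zeta n).
Hypothesis biorth : forall n k, zeta n (xi k) = (n == k)%:R.

Definition normalize (u : U) := (sqrtC (ip u u))^-1 *: u.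

Definition orth_residual (s : seq U) x := x - \sum_(v <- s) ip x v *: v.

Fixpoint gs_seq n : seq U :=
  if n is n'.+1 then rcons (gs_seq n') (normalize (orth_residual (gs_seq n') (xi n')))
  else [::].

Definition gs_residual n := orth_residual (gs_seq n) (xi n).

Definition gs_vec n := normalize (gs_residual n).

Lemma gs_seqE n : gs_seq n = mkseq gs_vec n.
Proof. by elim: n => [|n IHn] //; rewrite mkseqS -IHn. Qed.

Lemma gs_residualE n :
  gs_residual n = xi n - \sum_(k < n) ip (xi n) (gs_vec k) *: gs_vec k.
Proof.
rewrite /gs_residual /orth_residual gs_seqE big_map.
rewrite -(big_mkord xpredT (fun k => ip (xi n) (gs_vec k) *: gs_vec k)).
by rewrite /index_iota subn0.
Qed.

Lemma ip_normalize u : u != 0 -> ip (normalize u) (normalize u) = 1.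
Proof.
move=> u0; have u_gt0 := ip_gt0 ipU u0.
have c_ge0 : 0 <= (sqrtC (ip u u))^-1 by rewrite invr_ge0 sqrtC_ge0 ltW.
rewrite /normalize (ipZl ipU) (ipZr ipU) (geC0_conj c_ge0) mulrA -expr2.
by rewrite exprVn sqrtCK mulVf // gt_eqF.
Qed.

Lemma zeta_gs_residual m n : (forall k, (k < n)%N -> zeta m (gs_vec k) = 0) ->
  zeta m (gs_residual n) = (m == n)%:R.
Proof.
move=> zeta_vec; rewrite gs_residualE (linear_forB (zetaL m)).
rewrite (linear_for_sum (zetaL m)) big1 ?biorth ?subr0 // => k _.
by rewrite (linear_forZ (zetaL m)) /= zeta_vec // mulr0.
Qed.

Lemma zeta_gs_vec m n : (n < m)%N -> zeta m (gs_vec n) = 0.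
Proof.
elim/ltn_ind: n m => n IHn m nm.
rewrite (linear_forZ (zetaL m)) /= zeta_gs_residual ?gtn_eqF ?mulr0 // => k kn.
by apply: IHn => //; apply: ltn_trans nm.
Qed.

Lemma gs_residual_neq0 n : gs_residual n != 0.
Proof.
apply/eqP => res0; have := zeta_gs_residual (zeta_gs_vec (m := n)).
by rewrite res0 (linear_for0 (zetaL n)) eqxx => /eqP; rewrite eq_sym oner_eq0.
Qed.

Lemma gs_residual_orthogonal n k : (k < n)%N ->
    (forall l, (l < n)%N -> ip (gs_vec l) (gs_vec k) = (l == k)%:R) ->
  ip (gs_residual n) (gs_vec k) = 0.
Proof.
move=> kn ortho; rewrite gs_residualE (ipBl ipU) (ip_suml ipU).
rewrite (bigD1 (Ordinal kn)) //= big1 => [|l lk]; last first.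
  by rewrite (ipZl ipU) ortho // (negbTE (lk : val l != k)) mulr0.
by rewrite (ipZl ipU) ortho // eqxx mulr1 addr0 subrr.
Qed.

Lemma gs_orthonormal_le n m : (m <= n)%N -> ip (gs_vec n) (gs_vec m) = (n == m)%:R.
Proof.
elim/ltn_ind: n m => n IHn m; rewrite leq_eqVlt => /predU1P[->|mn].
  by rewrite ip_normalize ?gs_residual_neq0 ?eqxx.
have ortho l : (l < n)%N -> ip (gs_vec l) (gs_vec m) = (l == m)%:R.
  move=> ln; have [ml|lm] := leqP m l; first exact: (IHn l ln m ml).
  by rewrite (ip_sym ipU) (IHn m mn l (ltnW lm)) rmorph_nat eq_sym.
rewrite (gtn_eqF mn) {1}/gs_vec /normalize (ipZl ipU).
by rewrite (gs_residual_orthogonal mn ortho) mulr0.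
Qed.

Lemma gs_orthonormal n m : ip (gs_vec n) (gs_vec m) = (n == m)%:R.
Proof.
have [mn|/ltnW nm] := leqP m n; first exact: gs_orthonormal_le.
by rewrite (ip_sym ipU) gs_orthonormal_le // eq_sym rmorph_nat.
Qed.

Lemma gs_span n : exists a : nat -> R[i], xi n = \sum_(k < n.+1) a k *: gs_vec k.
Proof.
pose c := sqrtC (ip (gs_residual n) (gs_residual n)).
exists (fun k => if (k < n)%N then ip (xi n) (gs_vec k) else c).
have c_neq0 : c != 0.
  by rewrite sqrtC_eq0 gt_eqF // (ip_gt0 ipU (gs_residual_neq0 n)).
rewrite big_ord_recr /= ltnn {2}/gs_vec /normalize -/c scalerA mulfV // scale1r.
under eq_bigr => k _ do rewrite ltn_ord.
by rewrite gs_residualE addrC subrK.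
Qed.
End GramSchmidt.

Lemma dual_elt_total_eq (R : realType) (D : tvsType R[i]) (xi : nat -> D)
    (f g : D -> R[i]) :
  dual_elt f -> dual_elt g -> total_seq xi ->
  (forall k, f (xi k) = g (xi k)) -> forall x, f x = g x.
Proof.
move=> [fL fC] [gL gC] tot fg x.
have fS : linear_for (Num.conj \; *%R) f := fL.
have gS : linear_for (Num.conj \; *%R) g := gL.
have f_span N a : f (\sum_(k < N) a k *: xi k) = g (\sum_(k < N) a k *: xi k).
  rewrite (linear_for_sum fS) (linear_for_sum gS); apply: eq_bigr => k _.
  by rewrite (linear_forZ fS) (linear_forZ gS) /= fg.
apply/eqP; rewrite -subr_eq0; apply: contraT => fgx.
have eps_gt0 : 0 < `|f x - g x| / 2 by rewrite divr_gt0 ?normr_gt0 ?ltr0n.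
have [N [a [fs gs]]] := tot x _ (filterI (fC x _ eps_gt0) (gC x _ eps_gt0)).
have : `|f x - g x| < `|f x - g x|.
  rewrite {1}(_ : f x - g x = (f x - f (\sum_(k < N) a k *: xi k)) +
      (g (\sum_(k < N) a k *: xi k) - g x)); last by rewrite f_span addrA subrK.
  apply: le_lt_trans (ler_normD _ _) _; rewrite [X in _ < X]splitr.
  by apply: ltrD; rewrite // distrC.
by rewrite ltxx.
Qed.

Section Rigged.
Variables (R : realType) (D : tvsType R[i]) (H : lmodType R[i]).
Variables (ip : H -> H -> R[i]) (j : D -> H).

Lemma rigged_orthogonal_total_eq0 (xi : nat -> D) x :
  rigged ip j -> total_seq xi -> (forall n, ip x (j (xi n)) = 0) -> x = 0.
Proof.
move=> [[ipH _] jL _ jdense jcont] tot x_xi.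
have x_span N a : ip x (j (\sum_(k < N) a k *: xi k)) = 0.
  rewrite (linear_for_sum (jL : linear j)) (ip_sumr ipH) big1 // => k _.
  by rewrite (linear_forZ (jL : linear j)) (ipZr ipH) x_xi mulr0.
apply: (ip_eq0 ipH); apply/eqP; apply: contraT => x0.
have x_gt0 : 0 < ip x x by rewrite lt0r x0 ip_ge0.
have eps_gt0 : 0 < ip x x / 4 by rewrite divr_gt0 ?ltr0n.
have [y xy] := jdense x _ eps_gt0.
have [N [a ys]] := tot y _ (jcont y _ eps_gt0).
set s := \sum_(k < N) a k *: xi k in ys.
have : ip x x < ip x x.
  apply: le_lt_trans (ip_le_sub_orth ipH (x_span N a)) _.
  rewrite (_ : x - j s = (x - j y) - (j s - j y)); last by rewrite opprB addrA subrK.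
  apply: le_lt_trans (ip_sub_le ipH _ _) _.
  rewrite [X in _ < X](_ : ip x x = 2 * (ip x x / 4) + 2 * (ip x x / 4)).
    by apply: ltrD; rewrite ltr_pM2l ?ltr0n.
  by field.
by rewrite ltxx.
Qed.

Lemma in_CDH_ip_dual_elt (S : D -> H) e :
  is_inner_product ip -> in_CDH ip j S -> ip e e = 1 -> dual_elt (fun x => ip e (S x)).
Proof.
move=> ipH [SL _ Scont] e1; split=> [a x y|x eps eps_gt0].
  by rewrite SL (ipDr ipH) (ipZr ipH).
apply: filterS (Scont x _ (exprn_gt0 2 eps_gt0)) => y Sxy.
by rewrite -(ipBr ipH) (normr_ip_lt ipH) ?ltW.
Qed.

Lemma in_CDH_bessel_like (S : D -> H) (e : nat -> H) :
  is_inner_product ip -> in_CDH ip j S ->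
  (forall n m, ip (e n) (e m) = (n == m)%:R) ->
  bessel_like (fun n x => ip (e n) (S x)).
Proof.
move=> ipH [SL _ Scont] ortho M Mb.
have [r [r_gt0 Mr]] := Mb _ (Scont 0 1 ltr01).
exists (r ^+ 2) => x Mx N.
have r_le_norm : r <= `|r| by rewrite ger0_norm // ltW.
have [u Su <-] := Mr r r_le_norm x Mx.
rewrite (linear_for0 (SL : linear S)) subr0 in Su.
apply: le_trans (bessel_inequality ipH (N := N) _ (fun k m _ _ => ortho k m)) _.
rewrite (linear_forZ (SL : linear S)) (ipZl ipH) (ipZr ipH) mulrA.
by rewrite (geC0_conj (ltW r_gt0)) -expr2 ler_piMr ?exprn_ge0 ?ltW.
Qed.
End Rigged.

Theorem proposition2p17 (R : realType) (D : tvsType R[i]) (H : lmodType R[i])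
    (ip : H -> H -> R[i]) (j : D -> H)
    (zeta : nat -> D -> R[i]) (xi : nat -> D) :
  rigged ip j ->
  complete_tvs D ->
  reflexive_tvs D ->
  (forall n, dual_elt (zeta n)) ->
  (forall n k : nat, zeta n (xi k) = (n == k)%:R) ->
  total_seq xi ->
  riesz_fischer_like ip j xi ->
  bessel_like zeta.
Proof.
move=> rig _ _ zeta_dual biorth tot RF; have [[ipH _] jL jI _ _] := rig.
have zetaL n : linear_for (Num.conj \; *%R) (zeta n) by case: (zeta_dual n).
have ipD := is_inner_product_comp ipH (jL : linear j) jI.
pose e n := j (gs_vec (fun x y => ip (j x) (j y)) xi n).
have e_ortho n m : ip (e n) (e m) = (n == m)%:R := gs_orthonormal ipD zetaL biorth n m.
have e_basis : orthonormal_basis ip e.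
  split=> // x xe; apply: (rigged_orthogonal_total_eq0 rig tot) => n.
  have [a ->] := gs_span ipD zetaL biorth n.
  rewrite (linear_for_sum (jL : linear j)) (ip_sumr ipH) big1 // => k _.
  by rewrite (linear_forZ (jL : linear j)) (ipZr ipH) xe mulr0.
have [S [SH Sxi]] := RF e e_basis.
have zetaE n x : zeta n x = ip (e n) (S x).
  have e1 : ip (e n) (e n) = 1 by rewrite e_ortho eqxx.
  apply: (dual_elt_total_eq (zeta_dual n) (in_CDH_ip_dual_elt ipH SH e1) tot) => k.
  by rewrite biorth Sxi e_ortho.
move=> M Mb; have [c bound] := in_CDH_bessel_like ipH SH e_ortho Mb.
by exists c => x Mx N; under eq_bigr do rewrite zetaE; apply: bound.
Qed.
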